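(* Let $X$ be a prelength space and $Y$ a metric space. For any $f\in\mathfrak{C}(X\to Y)$, the function $\mathrm{ap}(f):\mathfrak{C}(X)\to\mathfrak{C}(Y)$ is uniformly continuous with modulus $\lambda\varepsilon.\,\mu_{f(\varepsilon/3)}(\tfrac{\varepsilon}{3})$, where $\mu_{f(\varepsilon/3)}$ is the modulus of the uniformly continuous function $f(\tfrac{\varepsilon}{3}):X\to Y$.
   Context: $\mathbb{Q}^+$ denotes the strictly positive rationals; all $\varepsilon,\delta$ (with indices) range over $\mathbb{Q}^+$. A metric space is a triple $(X,\asymp,B)$ where $\asymp$ is an equivalence relation on $X$ and $B$ assigns to each $\varepsilon\in\mathbb{Q}^+$ a binary relation $B_\varepsilon$ on $X$ respecting $\asymp$, such that: (1) each $B_\varepsilon$ is reflexive; (2) each $B_\varepsilon$ is symmetric; (3) if $B_{\varepsilon_1}(a,b)$ and $B_{\varepsilon_2}(b,c)$ then $B_{\varepsilon_1+\varepsilon_2}(a,c)$; (4) if $B_{\varepsilon+\delta}(a,b)$ for all $\delta$, then $B_\varepsilon(a,b)$; (5) if $B_\varepsilon(a,b)$ for all $\varepsilon$, then $a\asymp b$. A prelength space is a metric space such that for all $a,b,\varepsilon,\delta_1,\delta_2$ with $\varepsilon<\delta_1+\delta_2$ and $B_\varepsilon(a,b)$ there exists $c$ with $B_{\delta_1}(a,c)$ and $B_{\delta_2}(c,b)$. A regular function over a metric space $W$ is a function $x:\mathbb{Q}^+\to W$ such that $B_{\varepsilon_1+\varepsilon_2}(x(\varepsilon_1),x(\varepsilon_2))$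 for all $\varepsilon_1,\varepsilon_2$; $\mathfrak{C}(W)$ is the metric space of regular functions with $x\asymp y$ iff $B_{2\varepsilon}(x(\varepsilon),y(\varepsilon))$ for all $\varepsilon$ and $B'_\varepsilon(x,y)$ iff $B_{\varepsilon+\delta_1+\delta_2}(x(\delta_1),y(\delta_2))$ for all $\delta_1,\delta_2$. A uniformly continuous function $g:X\to Y$ is a pair of a function and a modulus $\mu_g$ with $B^X_{\mu_g(\varepsilon)}(x_1,x_2)\Rightarrow B^Y_\varepsilon(g(x_1),g(x_2))$. $X\to Y$ is the metric space of uniformly continuous functions with $B_\varepsilon(g,h)$ iff $B^Y_\varepsilon(g(a),h(a))$ for all $a$, and $g\asymp h$ iff $g(a)\asymp h(a)$ for all $a$. $\mathrm{map}(g)(x)=\lambda\varepsilon.\,g(x(\mu_g(\varepsilon)))$, and for $f\in\mathfrak{C}(X\to Y)$, $\mathrm{ap}(f)(x)=\lambda\varepsilon.\,\mathrm{map}(f(\tfrac{\varepsilon}{2}))(x)(\tfrac{\varepsilon}{2})$. *)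

From mathcomp Require Import all_boot all_order all_algebra.
Set Implicit Arguments. Unset Strict Implicit. Unset Printing Implicit Defensive.
Import Order.TTheory GRing.Theory Num.Theory.
Local Open Scope ring_scope.

Definition Qpos := {q : rat | 0 < q}.

Definition qpadd (a b : Qpos) : Qpos :=
  exist (fun q : rat => 0 < q) (sval a + sval b) (addr_gt0 (proj2_sig a) (proj2_sig b)).

Lemma qpdivn_pos (a : Qpos) (n : nat) : 0 < sval a / (n.+1)%:R.
Proof. by apply: divr_gt0; [exact: (proj2_sig a) | rewrite ltr0n]. Qed.

(* a / (n+1) *)
Definition qpdivn (a : Qpos) (n : nat) : Qpos := exist (fun q : rat => 0 < q) _ (qpdivn_pos a n).
Definition qphalf (a : Qpos) : Qpos := qpdivn a 1.
Definition qpthird (a : Qpos) : Qpos := qpdivn a 2.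

Definition qplt (a b : Qpos) : Prop := sval a < sval b.

Record MetricSpace := {
  carrier :> Type;
  meq : carrier -> carrier -> Prop;
  ball : Qpos -> carrier -> carrier -> Prop;
  meq_refl : forall a, meq a a;
  meq_sym : forall a b, meq a b -> meq b a;
  meq_trans : forall a b c, meq a b -> meq b c -> meq a c;
  ball_resp : forall e a a' b b', meq a a' -> meq b b' -> ball e a b -> ball e a' b';
  ball_refl : forall e a, ball e a a;
  ball_sym : forall e a b, ball e a b -> ball e b a;
  ball_triangle : forall e1 e2 a b c,
      ball e1 a b -> ball e2 b c -> ball (qpadd e1 e2) a c;
  ball_closed : forall e a b, (forall d, ball (qpadd e d) a b) -> ball e a b;
  ball_eq : forall a b, (forall e, ball e a b) -> meq a b
}.

Definition is_prelength (X : MetricSpace) : Prop :=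
  forall (a b : X) (e d1 d2 : Qpos),
    qplt e (qpadd d1 d2) -> ball e a b ->
    exists c : X, ball d1 a c /\ ball d2 c b.

Record UCFun (X Y : MetricSpace) := {
  ucf :> X -> Y;
  ucmu : Qpos -> Qpos;
  ucprop : forall (e : Qpos) (a b : X), ball (ucmu e) a b -> ball e (ucf a) (ucf b)
}.

Definition ball_uc (X Y : MetricSpace) (e : Qpos) (g h : UCFun X Y) : Prop :=
  forall a : X, ball e (g a) (h a).

Definition is_regular {W : Type} (B : Qpos -> W -> W -> Prop) (x : Qpos -> W) : Prop :=
  forall e1 e2, B (qpadd e1 e2) (x e1) (x e2).

(* Ball of the completion C(W) *)
Definition ballC {W : Type} (B : Qpos -> W -> W -> Prop) (e : Qpos) (x y : Qpos -> W) : Prop :=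
  forall d1 d2, B (qpadd (qpadd e d1) d2) (x d1) (y d2).

Definition cmap (X Y : MetricSpace) (g : UCFun X Y) (x : Qpos -> X) : Qpos -> Y :=
  fun e => g (x (ucmu g e)).

Definition cap (X Y : MetricSpace) (f : Qpos -> UCFun X Y) (x : Qpos -> X) : Qpos -> Y :=
  fun e => cmap (f (qphalf e)) x (qphalf e).

(* ap(f)(x)(e) = f(e/2)(x(m)) with m = mu_{f(e/2)}(e/2).  As x(m) and x(d) are
   (m + d)-close, the prelength property yields c with d(x(m), c) <= m and
   d(c, x(d)) <= 2d, so ap(f)(x)(e) is e/2-close to f(e/2)(c) with c arbitrarily near
   x(d).  Comparing two such points through the regularity of f and the modulus of a
   single f(e') leaves an arbitrarily small excess, removed by closedness of balls.  For
   the modulus, the prelength property splits the distance mu + (small) between the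
   points for x and y into mu and a distance below the modulus of f(e/3) at the excess. *)
From mathcomp Require Import all_boot all_order all_algebra.
From mathcomp Require Import lra.
Import Order.TTheory GRing.Theory Num.Theory.
Local Open Scope ring_scope.

Lemma qpos_gt0 (e : Qpos) : 0 < sval e.
Proof. exact: proj2_sig e. Qed.

Lemma ball_le {X : MetricSpace} (e e' : Qpos) (a b : X) :
  sval e <= sval e' -> ball e a b -> ball e' a b.
Proof.
rewrite le_eqVlt => /orP [/eqP/val_inj <- //|lt_ee' bab].
have gap_gt0 : 0 < sval e' - sval e by rewrite subr_gt0.
set gap : Qpos := exist (fun q : rat => 0 < q) _ gap_gt0.
have -> : e' = qpadd e gap by apply: val_inj; rewrite /= addrC subrK.
exact: ball_triangle bab (ball_refl _ b).
Qed.

Lemma regular_prelength_approx {X : MetricSpace} (x : Qpos -> X) (e d : Qpos) :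
  is_prelength X -> is_regular (@ball X) x ->
  exists c : X, ball e (x e) c /\ ball (qpadd d d) c (x d).
Proof.
move=> HX Hx; apply: HX (Hx e d); rewrite /qplt /=.
by have := qpos_gt0 d; lra.
Qed.

Section Ap.

Variables (X Y : MetricSpace).
Hypothesis HX : is_prelength X.
Variable f : Qpos -> UCFun X Y.
Hypothesis Hf : is_regular (@ball_uc X Y) f.

Lemma cap_approx (x : Qpos -> X) (e d : Qpos) : is_regular (@ball X) x ->
  exists c : X, ball (qpadd d d) c (x d) /\
                ball (qphalf e) (cap f x e) (f (qphalf e) c).
Proof.
move=> Hx; set m := ucmu (f (qphalf e)) (qphalf e).
have [c [xc cx]] := regular_prelength_approx x m d HX Hx.
by exists c; split; last exact: ucprop.
Qed.

Lemma cap_regular (x : Qpos -> X) :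
  is_regular (@ball X) x -> is_regular (@ball Y) (cap f x).
Proof.
move=> Hx e1 e2; apply: ball_closed => g.
set eta := ucmu (f (qphalf e2)) g; set d := qpdivn eta 7.
have [c [cx Hc]] := cap_approx x e1 d Hx.
have [c' [c'x Hc']] := cap_approx x e2 d Hx.
have cc' : ball eta c c'.
  apply: ball_le (ball_triangle cx (ball_sym c'x)) => /=.
  by have := qpos_gt0 eta; lra.
have f1f2 := Hf (qphalf e1) (qphalf e2) c.
have f2cc' := ucprop cc'.
apply: ball_le (ball_triangle (ball_triangle (ball_triangle Hc f1f2) f2cc') (ball_sym Hc')).
by rewrite /=; lra.
Qed.

Lemma cap_ball (e : Qpos) (x y : Qpos -> X) :
  is_regular (@ball X) x -> is_regular (@ball X) y ->
  ballC (@ball X) (ucmu (f (qpthird e)) (qpthird e)) x y ->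
  ballC (@ball Y) e (cap f x) (cap f y).
Proof.
move=> Hx Hy Hxy d1 d2; apply: ball_closed => g.
set h := f (qpthird e); set mu := ucmu h (qpthird e).
set eta := ucmu h g; set d := qpdivn eta 7.
have [c [cx Hc]] := cap_approx x d1 d Hx.
have [c' [c'y Hc']] := cap_approx y d2 d Hy.
have [c'' [cc'' c''c']] : exists c'', ball mu c c'' /\ ball eta c'' c'.
  apply: HX (ball_triangle (ball_triangle cx (Hxy d d)) (ball_sym c'y)).
  by rewrite /qplt /=; have := qpos_gt0 eta; lra.
have f1h := Hf (qphalf d1) (qpthird e) c.
have hcc'' := ucprop cc''.
have hc''c' := ucprop c''c'.
have hf2 := Hf (qpthird e) (qphalf d2) c'.
apply: ball_le (ball_triangle (ball_triangle (ball_triangle (ball_triangle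
  (ball_triangle Hc f1h) hcc'') hc''c') hf2) (ball_sym Hc')).
by rewrite /=; lra.
Qed.

End Ap.

Theorem theorem27 (X Y : MetricSpace) (HX : is_prelength X)
  (f : Qpos -> UCFun X Y) (Hf : is_regular (@ball_uc X Y) f) :
  (forall x : Qpos -> X, is_regular (@ball X) x ->
      is_regular (@ball Y) (cap f x)) /\
  (forall (e : Qpos) (x y : Qpos -> X),
      is_regular (@ball X) x -> is_regular (@ball X) y ->
      ballC (@ball X) (ucmu (f (qpthird e)) (qpthird e)) x y ->
      ballC (@ball Y) e (cap f x) (cap f y)).
Proof.
split; [exact: cap_regular | exact: cap_ball].
Qed.
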